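(* Let $M$ be a compact connected boundaryless manifold, $X\in\mathfrak{X}^1(M)$ with flow $(X^t)_{t\in\mathbb{R}}$, and let $\Lambda=\bigcap_{t\in\mathbb{R}}X^t(U)$ be a compact isolated proper subset of $M$ with isolating neighborhood $U$. If $\Lambda$ is not future chaotic, then $\Lambda^-_X(U):=\overline{\bigcap_{t>0}X^{-t}(U)}$ has non-empty interior. Likewise, if $\Lambda$ is not past chaotic, then $\Lambda^+_X(U):=\overline{\bigcap_{t>0}X^{t}(U)}$ has non-empty interior.
   Context: $M$ carries a Riemannian metric with distance $\operatorname{dist}$. A compact $X^t$-invariant set $\Lambda$ is isolated with isolating neighborhood $U$ if $U$ is a neighborhood of $\Lambda$ with $\Lambda=\bigcap_{t\in\mathbb{R}}X^t(U)$; it is proper if $\emptyset\neq\Lambda\neq M$. An invariant set $\Lambda$ is future chaotic with constant $r>0$ if for every $x\in\Lambda$ and every neighborhood $V$ of $x$ in $M$ there exist $y\in V$ and $t>0$ with $\operatorname{dist}(X^t(y),X^t(x))\ge r$; ''future chaotic'' means future chaotic with some constant $r>0$. $\Lambda$ is past chaotic (with constant $r$) if it is future chaotic (with constant $r$) for the flow generated by $-X$. *)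

From HB Require Import structures.
From mathcomp Require Import all_boot all_order all_algebra.
From mathcomp Require Import all_classical all_reals all_analysis.
Set Implicit Arguments. Unset Strict Implicit. Unset Printing Implicit Defensive.
Import Order.TTheory GRing.Theory Num.Theory numFieldNormedType.Exports.
Local Open Scope classical_set_scope.
Local Open Scope ring_scope.

Definition is_flow (R : realType) (M : topologicalType) (phi : R -> M -> M) :=
  [/\ forall x, phi 0 x = x,
      forall s t x, phi (s + t) x = phi s (phi t x)
    & continuous (fun p : R * M => phi p.1 p.2)].

Definition isolated_with (R : realType) (M : topologicalType) (phi : R -> M -> M)
  (Lam U : set M) :=
  (forall x, Lam x -> nbhs x U) /\
  Lam = \bigcap_(t in [set: R]) (phi t @` U).

(* Future chaotic with constant r (dist(X^t y, X^t x) >= r written as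
   "not in the open ball of radius r"). *)
Definition future_chaotic_with (R : realType) (M : pseudoMetricType R)
  (phi : R -> M -> M) (Lam : set M) (r : R) :=
  forall x, Lam x -> forall V, nbhs x V ->
    exists y, exists t, [/\ V y, 0 < t & ~ ball (phi t x) r (phi t y)].

Definition future_chaotic (R : realType) (M : pseudoMetricType R)
  (phi : R -> M -> M) (Lam : set M) :=
  exists r, 0 < r /\ future_chaotic_with phi Lam r.

(* Past chaotic: future chaotic for the flow of -X, i.e. t |-> X^{-t}. *)
Definition past_chaotic (R : realType) (M : pseudoMetricType R)
  (phi : R -> M -> M) (Lam : set M) :=
  future_chaotic (fun t => phi (- t)) Lam.

Definition Lambda_minus (R : realType) (M : topologicalType) (phi : R -> M -> M)
  (U : set M) := closure (\bigcap_(t in [set t : R | 0 < t]) (phi (- t) @` U)).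

Definition Lambda_plus (R : realType) (M : topologicalType) (phi : R -> M -> M)
  (U : set M) := closure (\bigcap_(t in [set t : R | 0 < t]) (phi t @` U)).

(* If Lambda is not future chaotic with constant r, where r is a
   uniform radius such that the r-neighbourhood of Lambda lies in U, then some
   x in Lambda has a neighbourhood V whose forward orbits stay r-close to the
   forward orbit of x, which remains in Lambda.  Hence V is forward trapped in
   U, so V lies in the intersection of the X^{-t}(U), t > 0, and Lambda^-_X(U)
   has non-empty interior.  The past case is the same argument for the
   reversed flow t |-> X^{-t}. *)
From HB Require Import structures.
From mathcomp Require Import all_boot all_order all_algebra.
From mathcomp Require Import all_classical all_reals all_analysis.
Import Order.TTheory GRing.Theory Num.Theory numFieldNormedType.Exports.
Local Open Scope classical_set_scope.
Local Open Scope ring_scope.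

Lemma compact_uniform_ball {R : realType} {M : pseudoMetricType R}
    {K U : set M} :
  compact K -> (forall x, K x -> nbhs x U) ->
  exists2 r : R, 0 < r & forall z, K z -> ball z r `<=` U.
Proof.
move=> /compact_near_coveringP cover KU.
have : \forall r \near (0 : R)^'+, K `<=` (fun z => ball z r `<=` U).
  apply: (cover R (0 : R)^'+ (fun r z => ball z r `<=` U)) => x Kx.
  have /nbhs_ballP [e /= e0 eU] := KU x Kx.
  near=> y r => z yz; apply: eU.
  rewrite (splitr e); apply: (ball_triangle (y := y)).
    by near: y; apply/nbhs_ballP; exists (e / 2) => /=; rewrite ?divr_gt0.
  apply: (le_ball (e1 := r)) => //; near: r.
  by apply: nbhs_right_le; rewrite divr_gt0.
move=> /(filterI (nbhs_right_gt 0)) /filter_ex [r [r0 rU]].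
by exists r.
Unshelve. all: end_near. Qed.

Lemma isolated_invariant {R : realType} {M : topologicalType}
    {phi : R -> M -> M} {Lam U : set M} :
  (forall s t x, phi (s + t) x = phi s (phi t x)) ->
  Lam = \bigcap_(t in [set: R]) (phi t @` U) ->
  forall t x, Lam x -> Lam (phi t x).
Proof.
move=> phiD -> t x Lx s _.
have [u Uu <-] := Lx (s - t) I.
by exists u => //; rewrite -phiD addrC subrK.
Qed.

Lemma not_future_chaotic_ball {R : realType} {M : pseudoMetricType R}
    {psi : R -> M -> M} {Lam : set M} {r : R} :
  ~ future_chaotic psi Lam -> 0 < r ->
  exists2 x, Lam x & exists2 V, nbhs x V &
    forall y t, V y -> 0 < t -> ball (psi t x) r (psi t y).
Proof.
move=> nchaos r0; apply: contrapT => nclose; apply: nchaos.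
exists r; split=> // x Lx V Vx; apply: contrapT => nsep.
apply: nclose; exists x => //; exists V => // y t Vy t0.
by apply: contrapT => far; apply: nsep; exists y, t.
Qed.

Section ForwardTrapping.
Variables (R : realType) (M : pseudoMetricType R) (psi : R -> M -> M).
Hypothesis psi0 : forall x, psi 0 x = x.
Hypothesis psiD : forall s t x, psi (s + t) x = psi s (psi t x).

Lemma forward_trapped_bigcap (U : set M) (y : M) :
  (forall t, 0 < t -> U (psi t y)) ->
  (\bigcap_(t in [set t : R | 0 < t]) (psi (- t) @` U)) y.
Proof.
by move=> yU t /= t0; exists (psi t y); [exact: yU | rewrite -psiD addNr psi0].
Qed.

Lemma not_future_chaotic_interior_Lambda_minus (Lam U : set M) :
  compact Lam -> (forall x, Lam x -> nbhs x U) ->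
  (forall t x, Lam x -> Lam (psi t x)) ->
  ~ future_chaotic psi Lam -> interior (Lambda_minus psi U) !=set0.
Proof.
move=> cLam LamU inv nchaos.
have [r r0 rU] := compact_uniform_ball cLam LamU.
have [x Lx [V Vx close]] := not_future_chaotic_ball nchaos r0.
exists x; apply: filterS Vx => y Vy; apply: subset_closure.
apply: forward_trapped_bigcap => t t0.
exact: rU (inv t x Lx) _ (close y t Vy t0).
Qed.

End ForwardTrapping.

Lemma Lambda_plus_reversed {R : realType} {M : topologicalType}
    (phi : R -> M -> M) (U : set M) :
  Lambda_plus phi U = Lambda_minus (fun t => phi (- t)) U.
Proof. by congr closure; apply: eq_bigcapr => t _; rewrite opprK. Qed.

Theorem lemma3p1 (R : realType) (M : pseudoMetricType R)
  (phi : R -> M -> M) (Lam U : set M) :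
  hausdorff_space M ->
  compact [set: M] -> connected [set: M] ->
  is_flow phi ->
  compact Lam ->
  isolated_with phi Lam U ->
  Lam !=set0 -> Lam <> [set: M] ->
  (~ future_chaotic phi Lam -> interior (Lambda_minus phi U) !=set0) /\
  (~ past_chaotic phi Lam -> interior (Lambda_plus phi U) !=set0).
Proof.
move=> _ _ _ [phi0 phiD _] cLam [LamU LamE] _ _.
have inv := isolated_invariant phiD LamE.
split=> [|npast]; first exact: not_future_chaotic_interior_Lambda_minus.
rewrite Lambda_plus_reversed.
apply: (@not_future_chaotic_interior_Lambda_minus _ _ (fun t => phi (- t))
  _ _ _ _ cLam LamU _ npast).
- by move=> x; rewrite oppr0 phi0.
- by move=> s t x; rewrite opprD phiD.
- by move=> t x /(inv (- t)).
Qed.
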